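(* Let $\ell>r\ge 2$ be integers and let $m=m_{r,\ell}$. Then (i) $m>\max\left\{\frac{\ell(r-1)}{2(\ell-r)},\,r-1\right\}$; and (ii) $m<\min\left\{\frac{\ell(\ell-1)}{2(\ell-r)},\,\frac{r}{\alpha}\right\}$, where $\alpha=\alpha(\ell/r)$ is the unique positive real root of the equation $e^{(\ell/r)x}(1-x)=1$, and $\alpha\in(1-r^2/\ell^2,\,1)$. In particular, $m<\frac{r\ell^2}{\ell^2-r^2}$.
   Context: $m_{r,\ell}$ is the unique integer $k\ge r$ maximizing $f(k)=\frac{(k-1)(k-2)\cdots(k-r+1)}{k^{\ell-1}}$ over all integers $k\ge r$. *)

From Stdlib Require Import Reals Lra Lia.
Open Scope R_scope.

(* falling_prod k j = (k-1)(k-2)...(k-j)  (as reals; used only with j < k) *)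
Fixpoint falling_prod (k j : nat) : R :=
  match j with
  | O => 1
  | S j' => INR (k - S j') * falling_prod k j'
  end.

Definition frl (r l k : nat) : R :=
  falling_prod k (r - 1) / (INR k ^ (l - 1)).

Definition is_mrl (r l m : nat) : Prop :=
  (r <= m)%nat /\
  (forall k : nat, (r <= k)%nat -> frl r l k <= frl r l m) /\
  (forall k : nat, (r <= k)%nat -> frl r l k = frl r l m -> k = m).

(* The ratio f(k+1)/f(k) equals (k/(k-r+1)) (k/(k+1))^(l-1), so the maximality of f at m gives
   f(m+1) < f(m) and, when m > r, f(m-1) < f(m): two inequalities between logarithms of ratios
   of nearby integers.  Bounding ln((1+z)/(1-z)) = 2z + 2z^3/3 + ... from below and above turns
   them into the polynomial bounds in (i) and (ii).
   On (0,1) the equation e^(tx) (1-x) = 1 reads tx + ln(1-x) = 0, i.e. ln(1-x)/x = -t, and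
   x |-> ln(1-x)/x is strictly decreasing; hence alpha is unique and the sign of tx + ln(1-x)
   tells on which side of alpha the point x lies.  For t = l/r this sign is positive at
   1 - r^2/l^2 and, by the second step inequality, negative at r/m. *)

From Stdlib Require Import Reals Lra Lia.
From Coquelicot Require Import Coquelicot.
Open Scope R_scope.

Lemma lt_of_derive_pos (f f' : R -> R) (a b : R) : a < b ->
  (forall c, a <= c <= b -> derivable_pt_lim f c (f' c)) ->
  (forall c, a < c < b -> 0 < f' c) -> f a < f b.
Proof.
  intros hab hder hpos.
  destruct (MVT_cor2 f f' a b hab hder) as [c [hmvt hc]].
  assert (0 < f' c * (b - a)) by (apply Rmult_lt_0_compat; [apply hpos|]; lra).
  lra.
Qed.

Lemma ln_atanh_gt (z : R) : 0 < z < 1 ->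
  2 * z + 2 * z ^ 3 / 3 < ln (1 + z) - ln (1 - z).
Proof.
  intros hz.
  set (f x := ln (1 + x) - ln (1 - x) - (2 * x + 2 * x ^ 3 / 3)).
  enough (f 0 < f z) by (unfold f in *; rewrite Rplus_0_r, Rminus_0_r, ln_1 in *; lra).
  apply (lt_of_derive_pos f (fun x => 2 * x ^ 4 / (1 - x ^ 2))); [lra| |].
  - intros c hc. apply is_derive_Reals. unfold f. auto_derive.
    + repeat split; nra.
    + field. split; nra.
  - intros c hc. apply Rdiv_lt_0_compat; [|nra].
    apply Rmult_lt_0_compat; [lra | apply pow_lt; lra].
Qed.

Lemma ln_atanh_lt (z : R) : 0 < z < 1 ->
  ln (1 + z) - ln (1 - z) < 2 * z + 2 * z ^ 3 / (3 * (1 - z ^ 2)).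
Proof.
  intros hz.
  set (f x := 2 * x + 2 * x ^ 3 / (3 * (1 - x ^ 2)) - (ln (1 + x) - ln (1 - x))).
  enough (f 0 < f z) by (unfold f in *; rewrite Rplus_0_r, Rminus_0_r, ln_1 in *; lra).
  apply (lt_of_derive_pos f (fun x => 4 * x ^ 4 / (3 * (1 - x ^ 2) ^ 2))); [lra| |].
  - intros c hc. apply is_derive_Reals. unfold f. auto_derive.
    + repeat split; nra.
    + field. repeat split; nra.
  - intros c hc. apply Rdiv_lt_0_compat.
    + apply Rmult_lt_0_compat; [lra | apply pow_lt; lra].
    + apply Rmult_lt_0_compat; [lra | apply pow_lt; nra].
Qed.

Lemma ln_div_atanh (a b : R) : 0 < a < b ->
  let z := (b - a) / (b + a) in 0 < z < 1 /\ ln (b / a) = ln (1 + z) - ln (1 - z).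
Proof.
  intros hab z.
  assert (e1 : 1 + z = 2 * b / (b + a)) by (unfold z; field; lra).
  assert (e2 : 1 - z = 2 * a / (b + a)) by (unfold z; field; lra).
  split.
  - unfold z. split; [apply Rdiv_lt_0_compat; lra|].
    apply Rmult_lt_reg_r with (b + a); [lra|]. field_simplify; lra.
  - rewrite e1, e2, <- ln_div by (apply Rdiv_lt_0_compat; lra).
    f_equal. field. lra.
Qed.

Lemma ln_div_gt_atanh (a b z : R) : 0 < a < b -> z = (b - a) / (b + a) ->
  2 * z + 2 * z ^ 3 / 3 < ln (b / a).
Proof.
  intros hab ->. destruct (ln_div_atanh a b hab) as [hz ->]. exact (ln_atanh_gt _ hz).
Qed.

Lemma ln_div_lt_atanh (a b z : R) : 0 < a < b -> z = (b - a) / (b + a) ->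
  ln (b / a) < 2 * z + 2 * z ^ 3 / (3 * (1 - z ^ 2)).
Proof.
  intros hab ->. destruct (ln_div_atanh a b hab) as [hz ->]. exact (ln_atanh_lt _ hz).
Qed.

Lemma ln_div_gt_midpoint (a b : R) : 0 < a < b -> 2 * (b - a) / (b + a) < ln (b / a).
Proof.
  intros hab.
  assert (hz : 0 < (b - a) / (b + a)) by (apply Rdiv_lt_0_compat; lra).
  assert (0 < ((b - a) / (b + a)) ^ 3) by (apply pow_lt; exact hz).
  eapply Rle_lt_trans; [|exact (ln_div_gt_atanh a b _ hab eq_refl)].
  unfold Rdiv at 1. rewrite Rmult_assoc. lra.
Qed.

Lemma ln_div_lt_trapezoid (a b : R) : 0 < a < b -> ln (b / a) < (b - a) * (b + a) / (2 * a * b).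
Proof.
  intros hab. destruct (ln_div_atanh a b hab) as [hz _].
  set (z := (b - a) / (b + a)) in hz.
  eapply Rlt_trans; [exact (ln_div_lt_atanh a b z hab eq_refl)|].
  replace ((b - a) * (b + a) / (2 * a * b)) with (2 * z / (1 - z ^ 2))
    by (unfold z; field; split; nra).
  assert (0 < z ^ 3) by (apply pow_lt; lra).
  apply Rmult_lt_reg_r with (3 * (1 - z ^ 2)); [nra|].
  field_simplify; nra.
Qed.

Lemma atanh_cubic_scale (c z w : R) : 0 <= c -> 0 < z < 1 -> c * z <= w ->
  z ^ 2 <= w ^ 2 * (1 - z ^ 2) ->
  c * (2 * z + 2 * z ^ 3 / (3 * (1 - z ^ 2))) <= 2 * w + 2 * w ^ 3 / 3.
Proof.
  intros hc hz hcw hzw.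
  assert (hw : 0 <= w) by nra.
  assert (hq : z ^ 2 / (1 - z ^ 2) <= w ^ 2).
  { apply Rmult_le_reg_r with (1 - z ^ 2); [nra|]. field_simplify; nra. }
  replace (c * (2 * z + 2 * z ^ 3 / (3 * (1 - z ^ 2))))
    with (c * z * (2 + 2 / 3 * (z ^ 2 / (1 - z ^ 2)))) by (field; nra).
  replace (2 * w + 2 * w ^ 3 / 3) with (w * (2 + 2 / 3 * w ^ 2)) by field.
  apply Rmult_le_compat; try nra.
  assert (0 <= z ^ 2 / (1 - z ^ 2)) by (apply Rdiv_le_0_compat; nra).
  nra.
Qed.

Lemma ln_succ_ratio_le_small (r l k : R) : 2 <= r -> r < l -> r <= k ->
  2 * k * (l - r) <= l * (r - 1) ->
  (l - 1) * ln ((k + 1) / k) <= ln (k / (k - r + 1)).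
Proof.
  intros hr hrl hrk hsmall.
  (* The cubic terms are needed: with the midpoint and trapezoid bounds alone this step would
     require (2k+1)^2 <= 4k(k+1). *)
  set (z := 1 / (2 * k + 1)). set (w := (r - 1) / (2 * k - r + 1)).
  assert (hz : 0 < z < 1).
  { unfold z. split; [apply Rdiv_lt_0_compat; lra|].
    apply Rmult_lt_reg_r with (2 * k + 1); [lra|]. field_simplify; lra. }
  assert (hcw : (l - 1) * z <= w).
  { unfold z, w. apply Rmult_le_reg_r with ((2 * k + 1) * (2 * k - r + 1)); [nra|].
    field_simplify; lra. }
  assert (hzw : z ^ 2 <= w ^ 2 * (1 - z ^ 2)).
  { assert (hw : (2 * k - r + 1) <= 2 * k * (r - 1)) by nra.
    assert (hw2 : (2 * k - r + 1) ^ 2 <= 4 * k * (k + 1) * (r - 1) ^ 2) by nra.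
    unfold z, w. apply Rmult_le_reg_r with ((2 * k + 1) ^ 2 * (2 * k - r + 1) ^ 2).
    { apply Rmult_lt_0_compat; apply pow_lt; lra. }
    field_simplify; lra. }
  apply Rle_trans with ((l - 1) * (2 * z + 2 * z ^ 3 / (3 * (1 - z ^ 2)))).
  { apply Rmult_le_compat_l; [lra|]. apply Rlt_le, ln_div_lt_atanh; [lra|].
    unfold z. field. lra. }
  eapply Rle_trans; [exact (atanh_cubic_scale (l - 1) z w ltac:(lra) hz hcw hzw)|].
  apply Rlt_le, ln_div_gt_atanh; [lra|]. unfold w. field. lra.
Qed.

Lemma ln_pred_ratio_lt_large (r l k : R) : 2 <= r -> r + 1 <= l -> r + 1 <= k ->
  l * (l - 1) <= 2 * k * (l - r) ->
  ln ((k - 1) / (k - r)) < (l - 1) * ln (k / (k - 1)).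
Proof.
  intros hr hrl hrk hlarge.
  assert (hpoly : (r - 1) * (2 * k - r - 1) * (2 * k - 1) <= 4 * (l - 1) * (k - 1) * (k - r)).
  { assert (4 * (l - 1) * (r - 1) + 2 * (r - 1) - 2 * (r - 1) ^ 2 <= 4 * (l - r) * (k - 1))
      by nra.
    nra. }
  eapply Rlt_le_trans; [apply ln_div_lt_trapezoid; lra|].
  apply Rle_trans with ((l - 1) * (2 * (k - (k - 1)) / (k + (k - 1)))).
  - enough (0 <= (l - 1) * (2 * (k - (k - 1)) / (k + (k - 1)))
                 - (k - 1 - (k - r)) * (k - 1 + (k - r)) / (2 * (k - r) * (k - 1))) by lra.
    replace (_ - _)
      with ((4 * (l - 1) * (k - 1) * (k - r) - (r - 1) * (2 * k - r - 1) * (2 * k - 1))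
            / (2 * (k - r) * (k - 1) * (2 * k - 1))) by (field; lra).
    apply Rdiv_le_0_compat; [lra|]. apply Rmult_lt_0_compat; [nra | lra].
  - apply Rmult_le_compat_l; [lra|]. apply Rlt_le, ln_div_gt_midpoint. lra.
Qed.

Lemma ln_one_sub_gt (c : R) : 0 < c < 1 -> - (c / (1 - c)) < ln (1 - c).
Proof.
  intros hc.
  assert (h := ln_div_lt_trapezoid (1 - c) 1 ltac:(lra)).
  rewrite ln_div, ln_1 in h by lra.
  enough ((1 - (1 - c)) * (1 + (1 - c)) / (2 * (1 - c) * 1) < c / (1 - c)) by lra.
  apply Rmult_lt_reg_r with (2 * (1 - c)); [lra|]. field_simplify; nra.
Qed.

Lemma ln_one_sub_div_lt_iff (x y : R) : 0 < x < 1 -> 0 < y < 1 ->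
  ln (1 - y) / y < ln (1 - x) / x <-> x < y.
Proof.
  assert (decr : forall x y, 0 < x -> x < y -> y < 1 -> ln (1 - y) / y < ln (1 - x) / x).
  { intros a b ha hab hb.
    enough (- (ln (1 - a) / a) < - (ln (1 - b) / b)) by lra.
    apply (lt_of_derive_pos (fun c => - (ln (1 - c) / c))
             (fun c => (c / (1 - c) + ln (1 - c)) / c ^ 2)); [lra| |].
    - intros c hc. apply is_derive_Reals. auto_derive; [repeat split; lra|].
      replace (1 + - c) with (1 - c) by ring. field. lra.
    - intros c hc. apply Rdiv_lt_0_compat; [|apply pow_lt; lra].
      assert (h := ln_one_sub_gt c ltac:(lra)). lra. }
  intros hx hy. split.
  - intros h. destruct (Rtotal_order x y) as [?|[<-|hyx]]; [assumption|lra|].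
    assert (h' := decr y x ltac:(lra) hyx ltac:(lra)). lra.
  - intros hxy. apply decr; lra.
Qed.

Definition exp_root_gap (t x : R) : R := t * x + ln (1 - x).

Section ExpRoot.

Variable t : R.

Lemma exp_root_ln (a : R) : 0 < a -> exp (t * a) * (1 - a) = 1 ->
  a < 1 /\ ln (1 - a) / a = - t.
Proof.
  intros ha hroot.
  assert (ha1 : a < 1).
  { destruct (Rlt_le_dec a 1) as [|hge]; [assumption|].
    assert (0 < exp (t * a)) by apply exp_pos. nra. }
  split; [exact ha1|].
  assert (e : ln (exp (t * a) * (1 - a)) = 0) by (rewrite hroot; apply ln_1).
  rewrite ln_mult, ln_exp in e by (try apply exp_pos; lra).
  apply Rmult_eq_reg_r with a; [|lra]. field_simplify; lra.
Qed.

Lemma exp_root_lt_of_gap_neg (a x : R) : 0 < a -> exp (t * a) * (1 - a) = 1 ->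
  0 < x < 1 -> exp_root_gap t x < 0 -> a < x.
Proof.
  unfold exp_root_gap. intros ha hroot hx hneg. destruct (exp_root_ln a ha hroot) as [ha1 ea].
  apply ln_one_sub_div_lt_iff; [lra | exact hx|]. rewrite ea.
  apply Rmult_lt_reg_r with x; [lra|]. field_simplify; lra.
Qed.

Lemma lt_exp_root_of_gap_pos (a x : R) : 0 < a -> exp (t * a) * (1 - a) = 1 ->
  0 < x < 1 -> 0 < exp_root_gap t x -> x < a.
Proof.
  unfold exp_root_gap. intros ha hroot hx hpos. destruct (exp_root_ln a ha hroot) as [ha1 ea].
  apply ln_one_sub_div_lt_iff; [exact hx | lra|]. rewrite ea.
  apply Rmult_lt_reg_r with x; [lra|]. field_simplify; lra.
Qed.

Lemma exp_root_unique (a b : R) : 0 < a -> exp (t * a) * (1 - a) = 1 ->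
  0 < b -> exp (t * b) * (1 - b) = 1 -> a = b.
Proof.
  intros ha hra hb hrb.
  destruct (exp_root_ln a ha hra) as [ha1 ea], (exp_root_ln b hb hrb) as [hb1 eb].
  destruct (Rtotal_order a b) as [hab|[->|hba]]; [|reflexivity|].
  - apply (ln_one_sub_div_lt_iff a b) in hab; lra.
  - apply (ln_one_sub_div_lt_iff b a) in hba; lra.
Qed.

Lemma exp_root_exists (y : R) : 0 < y < 1 -> 0 < exp_root_gap t y ->
  exists a, y < a /\ exp (t * a) * (1 - a) = 1.
Proof.
  unfold exp_root_gap. intros hy hpos.
  set (f x := 1 - exp (t * x) * (1 - x)).
  assert (hf : continuity f) by (unfold f; reg).
  assert (hfy : f y < 0).
  { unfold f. rewrite <- (exp_ln (1 - y)) by lra. rewrite <- exp_plus.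
    assert (exp 0 < exp (t * y + ln (1 - y))) by (apply exp_increasing; lra).
    rewrite exp_0 in *. lra. }
  assert (hf1 : 0 < f 1) by (unfold f; rewrite Rminus_diag, Rmult_0_r; lra).
  destruct (IVT f y 1 hf ltac:(lra) hfy hf1) as [a [hya hfa]].
  exists a. split; [|unfold f in hfa; lra].
  destruct (proj1 hya) as [|<-]; [assumption|]. lra.
Qed.

End ExpRoot.

Lemma one_sub_inv_sq_bounds (t : R) : 1 < t -> 0 < 1 - / t ^ 2 < 1.
Proof.
  intros ht. assert (1 < t ^ 2) by nra.
  assert (0 < / t ^ 2) by (apply Rinv_0_lt_compat; lra).
  enough (/ t ^ 2 < 1) by lra. rewrite <- Rinv_1. apply Rinv_lt_contravar; lra.
Qed.

Lemma exp_root_gap_one_sub_inv_sq_pos (t : R) : 1 < t -> 0 < exp_root_gap t (1 - / t ^ 2).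
Proof.
  unfold exp_root_gap. intros ht.
  replace (1 - (1 - / t ^ 2)) with (/ t ^ 2) by ring.
  rewrite ln_Rinv, ln_pow by (try apply pow_lt; lra).
  assert (h := ln_div_lt_trapezoid 1 t ltac:(lra)). rewrite Rdiv_1_r in h.
  replace (t * (1 - / t ^ 2)) with ((t - 1) * (t + 1) / (2 * 1 * t) * 2) by (field; lra).
  simpl INR. lra.
Qed.

Lemma exp_root_gap_ratio_neg (r l k : R) : 0 < r -> 0 < l -> r + 1 <= k ->
  (l - 1) * ln (k / (k - 1)) < ln ((k - 1) / (k - r)) ->
  exp_root_gap (l / r) (r / k) < 0.
Proof.
  unfold exp_root_gap. intros hr hl hrk hstep.
  assert (hsplit : ln (1 - r / k) = - (ln (k / (k - 1)) + ln ((k - 1) / (k - r)))).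
  { rewrite <- ln_mult, <- ln_Rinv
      by (repeat apply Rdiv_lt_0_compat || apply Rmult_lt_0_compat; lra).
    f_equal. field. lra. }
  assert (hmid := ln_div_gt_midpoint (k - 1) k ltac:(lra)).
  assert (hinv : l / k < l * (2 * (k - (k - 1)) / (k + (k - 1)))).
  { enough (0 < l * (2 * (k - (k - 1)) / (k + (k - 1))) - l / k) by lra.
    replace (_ - _) with (l / (k * (2 * k - 1))) by (field; lra).
    apply Rdiv_lt_0_compat; nra. }
  replace (l / r * (r / k)) with (l / k) by (field; lra).
  nra.
Qed.

Lemma falling_prod_pos (k j : nat) : (j < k)%nat -> 0 < falling_prod k j.
Proof.
  induction j as [|j IH]; intros hjk; simpl; [lra|].
  apply Rmult_lt_0_compat; [apply lt_0_INR; lia | apply IH; lia].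
Qed.

Lemma falling_prod_succ (k j : nat) :
  falling_prod (S k) j * INR (k - j) = INR k * falling_prod k j.
Proof.
  induction j as [|j IH]; simpl.
  - rewrite Nat.sub_0_r. ring.
  - transitivity (INR (k - S j) * (falling_prod (S k) j * INR (k - j))); [ring|].
    rewrite IH. ring.
Qed.

Lemma frl_pos (r l k : nat) : (1 <= r)%nat -> (r <= k)%nat -> 0 < frl r l k.
Proof.
  intros hr hrk. unfold frl.
  apply Rdiv_lt_0_compat; [apply falling_prod_pos; lia | apply pow_lt, lt_0_INR; lia].
Qed.

Lemma frl_succ (r l k : nat) : (1 <= r)%nat -> (r <= k)%nat ->
  frl r l (S k) = frl r l k * (INR k / (INR k - INR r + 1)) / ((INR k + 1) / INR k) ^ (l - 1).
Proof.
  intros hr hrk.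
  assert (hk : 0 < INR k) by (apply lt_0_INR; lia).
  assert (hkr : INR (k - (r - 1)) = INR k - INR r + 1).
  { rewrite !minus_INR by lia. simpl. ring. }
  assert (hkr0 : 0 < INR k - INR r + 1) by (rewrite <- hkr; apply lt_0_INR; lia).
  assert (hfp := falling_prod_succ k (r - 1)). rewrite hkr in hfp.
  assert (hq : 0 < (INR k + 1) / INR k) by (apply Rdiv_lt_0_compat; lra).
  assert (hpow : ((INR k + 1) / INR k) ^ (l - 1) * INR k ^ (l - 1) = (INR k + 1) ^ (l - 1)).
  { rewrite <- Rpow_mult_distr. f_equal. field. lra. }
  unfold frl. rewrite S_INR, <- hpow.
  replace (falling_prod (S k) (r - 1))
    with (INR k * falling_prod k (r - 1) / (INR k - INR r + 1)) by (rewrite <- hfp; field; lra).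
  field. split; [|split]; try apply pow_nonzero; lra.
Qed.

Lemma ln_frl_succ (r l k : nat) : (1 <= r)%nat -> (r <= k)%nat -> (1 <= l)%nat ->
  ln (frl r l (S k)) - ln (frl r l k)
  = ln (INR k / (INR k - INR r + 1)) - (INR l - 1) * ln ((INR k + 1) / INR k).
Proof.
  intros hr hrk hl.
  assert (hk : 0 < INR k) by (apply lt_0_INR; lia).
  assert (hkr : 0 < INR k - INR r + 1).
  { assert (INR r <= INR k) by (apply le_INR; lia). lra. }
  assert (hf := frl_pos r l k hr hrk).
  assert (hq : 0 < (INR k + 1) / INR k) by (apply Rdiv_lt_0_compat; lra).
  assert (hd : 0 < INR k / (INR k - INR r + 1)) by (apply Rdiv_lt_0_compat; lra).
  rewrite frl_succ, ln_div, ln_mult, ln_pow, minus_INR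
    by first [lia | lra | apply pow_lt; lra | apply Rmult_lt_0_compat; lra].
  simpl INR. ring.
Qed.

Section Maximizer.

Variables r l m : nat.
Hypotheses (hr : (2 <= r)%nat) (hrl : (r < l)%nat) (hm : is_mrl r l m).

Lemma mrl_INR_bounds : 2 <= INR r /\ INR r + 1 <= INR l /\ INR r <= INR m.
Proof.
  destruct hm as [hrm _].
  split; [|split].
  - apply (le_INR 2). exact hr.
  - rewrite <- S_INR. apply le_INR. exact hrl.
  - apply le_INR. exact hrm.
Qed.

Lemma frl_lt_mrl (k : nat) : (r <= k)%nat -> k <> m -> frl r l k < frl r l m.
Proof.
  intros hrk hkm. destruct hm as [_ [hmax huniq]].
  destruct (Rle_lt_or_eq_dec _ _ (hmax k hrk)) as [|e]; [assumption|].
  exfalso. exact (hkm (huniq k hrk e)).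
Qed.

Lemma mrl_ln_succ_step :
  ln (INR m / (INR m - INR r + 1)) < (INR l - 1) * ln ((INR m + 1) / INR m).
Proof.
  destruct hm as [hrm _].
  assert (hlt : ln (frl r l (S m)) < ln (frl r l m)).
  { apply ln_increasing; [apply frl_pos; lia | apply frl_lt_mrl; lia]. }
  assert (e := ln_frl_succ r l m ltac:(lia) hrm ltac:(lia)). lra.
Qed.

Lemma mrl_ln_pred_step : (r < m)%nat ->
  (INR l - 1) * ln (INR m / (INR m - 1)) < ln ((INR m - 1) / (INR m - INR r)).
Proof.
  intros hrm.
  assert (hlt : ln (frl r l (m - 1)) < ln (frl r l m)).
  { apply ln_increasing; [apply frl_pos; lia | apply frl_lt_mrl; lia]. }
  assert (e := ln_frl_succ r l (m - 1) ltac:(lia) ltac:(lia) ltac:(lia)).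
  replace (S (m - 1)) with m in e by lia.
  rewrite minus_INR in e by lia. simpl INR in e.
  replace (INR m - 1 - INR r + 1) with (INR m - INR r) in e by ring.
  replace (INR m - 1 + 1) with (INR m) in e by ring.
  lra.
Qed.

Lemma mrl_gt : INR l * (INR r - 1) / (2 * (INR l - INR r)) < INR m.
Proof.
  destruct mrl_INR_bounds as (hR & hRL & hRM).
  apply Rnot_le_lt. intros hle.
  assert (hsmall : 2 * INR m * (INR l - INR r) <= INR l * (INR r - 1)).
  { set (q := INR l * (INR r - 1) / (2 * (INR l - INR r))) in hle.
    replace (INR l * (INR r - 1)) with (q * (2 * (INR l - INR r))) by (unfold q; field; lra).
    nra. }
  assert (h := ln_succ_ratio_le_small (INR r) (INR l) (INR m) hR ltac:(lra) hRM hsmall).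
  assert (h' := mrl_ln_succ_step). lra.
Qed.

Lemma mrl_lt : INR m < INR l * (INR l - 1) / (2 * (INR l - INR r)).
Proof.
  destruct mrl_INR_bounds as (hR & hRL & hRM).
  apply Rmult_lt_reg_r with (2 * (INR l - INR r)); [lra|].
  field_simplify; [|lra].
  destruct (Nat.eq_dec m r) as [->|hmr].
  - nra.
  - assert (hrm : (r < m)%nat) by (destruct hm; lia).
    assert (hRM1 : INR r + 1 <= INR m) by (rewrite <- S_INR; apply le_INR; lia).
    apply Rnot_le_lt. intros hlarge.
    assert (h := ln_pred_ratio_lt_large (INR r) (INR l) (INR m) hR hRL hRM1 ltac:(lra)).
    assert (h' := mrl_ln_pred_step hrm). lra.
Qed.

Lemma mrl_lt_div_exp_root (a : R) : 0 < a -> exp (INR l / INR r * a) * (1 - a) = 1 ->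
  INR m < INR r / a.
Proof.
  intros ha hroot.
  destruct mrl_INR_bounds as (hR & hRL & hRM).
  destruct (exp_root_ln _ a ha hroot) as [ha1 _].
  destruct (Nat.eq_dec m r) as [->|hmr].
  - apply Rmult_lt_reg_r with a; [lra|]. field_simplify; nra.
  - assert (hrm : (r < m)%nat) by (destruct hm; lia).
    assert (hRM1 : INR r + 1 <= INR m) by (rewrite <- S_INR; apply le_INR; lia).
    assert (hax : a < INR r / INR m).
    { apply (exp_root_lt_of_gap_neg (INR l / INR r)); [exact ha | exact hroot | |].
      - split; [apply Rdiv_lt_0_compat; lra|].
        apply Rmult_lt_reg_r with (INR m); [lra|]. field_simplify; lra.
      - apply exp_root_gap_ratio_neg; [lra | lra | exact hRM1 | exact (mrl_ln_pred_step hrm)]. }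
    apply Rmult_lt_reg_r with (a / INR m); [apply Rdiv_lt_0_compat; lra|].
    field_simplify; lra.
Qed.

End Maximizer.

Theorem lemma4p2 (r l m : nat) (hr : (2 <= r)%nat) (hrl : (r < l)%nat)
  (hm : is_mrl r l m) :
  (* (i) *)
  (INR l * (INR r - 1) / (2 * (INR l - INR r)) < INR m /\ INR r - 1 < INR m) /\
  (* (ii) *)
  (INR m < INR l * (INR l - 1) / (2 * (INR l - INR r)) /\
   (exists! a : R, 0 < a /\ exp ((INR l / INR r) * a) * (1 - a) = 1) /\
   (forall a : R, 0 < a -> exp ((INR l / INR r) * a) * (1 - a) = 1 ->
      INR m < INR r / a /\ 1 - INR r ^ 2 / INR l ^ 2 < a /\ a < 1)) /\
  (* in particular *)
  INR m < INR r * INR l ^ 2 / (INR l ^ 2 - INR r ^ 2).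
Proof.
  destruct (mrl_INR_bounds r l m hr hrl hm) as (hR & hRL & hRM).
  set (t := INR l / INR r).
  assert (ht : 1 < t) by (unfold t; apply Rmult_lt_reg_r with (INR r); [lra|]; field_simplify; lra).
  set (y := 1 - INR r ^ 2 / INR l ^ 2).
  assert (hyt : y = 1 - / t ^ 2) by (unfold y, t; field; lra).
  assert (hy : 0 < y < 1) by (rewrite hyt; exact (one_sub_inv_sq_bounds t ht)).
  assert (hgap : 0 < exp_root_gap t y).
  { rewrite hyt. exact (exp_root_gap_one_sub_inv_sq_pos t ht). }
  assert (halpha : forall a, 0 < a -> exp (t * a) * (1 - a) = 1 ->
                     INR m < INR r / a /\ y < a /\ a < 1).
  { intros a ha hroot. split; [|split].
    - exact (mrl_lt_div_exp_root r l m hr hrl hm a ha hroot).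
    - exact (lt_exp_root_of_gap_pos t a y ha hroot hy hgap).
    - exact (proj1 (exp_root_ln t a ha hroot)). }
  destruct (exp_root_exists t y hy hgap) as [alpha [hya hroot]].
  split; [split; [exact (mrl_gt r l m hr hrl hm) | lra]|].
  split; [split; [exact (mrl_lt r l m hr hrl hm)|split; [|exact halpha]]|].
  - exists alpha. split; [split; [lra | exact hroot]|].
    intros b [hb hrootb]. exact (exp_root_unique t alpha b ltac:(lra) hroot hb hrootb).
  - destruct (halpha alpha ltac:(lra) hroot) as [hm_alpha _].
    replace (INR r * INR l ^ 2 / (INR l ^ 2 - INR r ^ 2)) with (INR r / y)
      by (unfold y; field; split; nra).
    eapply Rlt_trans; [exact hm_alpha|].
    apply Rmult_lt_compat_l; [lra|]. apply Rinv_lt_contravar; nra.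
Qed.
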